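(* Let $\mathcal{G}=\langle V,E,T\rangle$ be an OMVPP $k$-grabbing pawn game and let $c$ be an initial configuration from which Player 1 wins. Then Player 1 has a strategy such that, for every Player 2 strategy, the resulting play reaches a vertex of $T$ within $|V|\cdot(k+1)$ rounds.
   Context: A pawn game with $d$ pawns consists of a finite directed graph $(V,E)$, a target set $T\subseteq V$, and sets $V_1,\dots,V_d\subseteq V$ with $V_1\cup\dots\cup V_d=V$ (possibly overlapping: OMVPP), where Pawn $j$ owns $V_j$. Player 1 moves the token from $v$ (along an edge) iff he controls at least one pawn owning $v$; otherwise Player 2 moves. In the $k$-grabbing mechanism, configurations are $\langle v,P,r\rangle$ with $v$ the token position, $P\subseteq[d]$ the pawns controlled by Player 1, and $r\in\{0,\dots,k\}$ the number of remaining grabs; initially $r=k$. A round consists of one move of the token followed by Player 1's option to grab: either do nothing or, if $r>0$, take a pawn $j\notin P$, moving to $P\cup\{j\}$ and $r-1$; grabbed pawns stay with Player 1 forever and Player 2 never grabs. Player 1 wins a play iff it visits $T$; Player 1 wins from a configuration if he has a strategy winning against all Player 2 strategies. *)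

From mathcomp Require Import all_boot.
Set Implicit Arguments. Unset Strict Implicit. Unset Printing Implicit Defensive.

Section PawnGame.
Variables (V : finType) (E : rel V) (d : nat) (Own : 'I_d -> {set V}).

(* configuration <v, P, r> : token position, pawns of Player 1, grabs left *)
Definition conf := (V * {set 'I_d} * nat)%type.
Definition cpos (c : conf) : V := c.1.1.
Definition cpawns (c : conf) : {set 'I_d} := c.1.2.
Definition cgrabs (c : conf) : nat := c.2.

Definition controls (P : {set 'I_d}) (v : V) : bool :=
  [exists j in P, v \in Own j].

(* General (history-dependent) strategies.  A history is the sequence of
   previous configurations; the current configuration is given separately. *)
Record strat1 := Strat1 {
  s1move : seq conf -> conf -> V;
  s1grab : seq conf -> conf -> V -> option 'I_d;
  s1move_ok : forall h c, E (cpos c) (s1move h c);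
  s1grab_ok : forall h c u j, s1grab h c u = Some j ->
                0 < cgrabs c /\ j \notin cpawns c }.

Record strat2 := Strat2 {
  s2move : seq conf -> conf -> V;
  s2move_ok : forall h c, E (cpos c) (s2move h c) }.

Definition step (s1 : strat1) (s2 : strat2) (h : seq conf) (c : conf) : conf :=
  let u := if controls (cpawns c) (cpos c) then s1move s1 h c
           else s2move s2 h c in
  match s1grab s1 h c u with
  | Some j => (u, j |: cpawns c, (cgrabs c).-1)
  | None => (u, cpawns c, cgrabs c)
  end.

Fixpoint run (s1 : strat1) (s2 : strat2) (c0 : conf) (n : nat) : seq conf * conf :=
  match n with
  | 0 => ([::], c0)
  | n'.+1 => let hc := run s1 s2 c0 n' in
             (rcons hc.1 hc.2, step s1 s2 hc.1 hc.2)
  end.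

Definition play (s1 : strat1) (s2 : strat2) (c0 : conf) (n : nat) : conf :=
  (run s1 s2 c0 n).2.

Definition wins1 (T : {set V}) (c0 : conf) : Prop :=
  exists s1 : strat1, forall s2 : strat2,
    exists n, cpos (play s1 s2 c0 n) \in T.

End PawnGame.

From mathcomp Require Import all_boot zify.
Set Implicit Arguments. Unset Strict Implicit. Unset Printing Implicit Defensive.

(* Player 1's winning region W(r, P) with r grabs left and pawns P is built
   by induction on r: it is the attractor of T for the controller given by P,
   where a move may also aim at a grab vertex, i.e. a vertex u lying in
   W(r - 1, j |: P) for some j outside P.  Following the attractor rank,
   Player 1 reaches T or a grab vertex within |V| rounds; every grab spends one
   of the k grabs, so T is reached within |V| * (k + 1) rounds.  Conversely the
   complement of an attractor is a trap: off W(r, P) Player 2 can move so that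
   the next configuration is again off its region, so Player 1 can only win
   from W(k, P0). *)

Section Rounds.
Variables (V : finType) (E : rel V) (d : nat) (Own : 'I_d -> {set V}).

Definition cpre (P : {set 'I_d}) (A : {set V}) : {set V} :=
  [set v | if controls Own P v then [exists u, E v u && (u \in A)]
           else [forall u, E v u ==> (u \in A)]].

Lemma cpre_mono P : {homo cpre P : A B / A \subset B}.
Proof.
move=> A B /subsetP sAB; apply/subsetP => v; rewrite !inE.
case: ifP => _.
  by case/existsP=> u /andP[Evu Au]; apply/existsP; exists u; rewrite Evu sAB.
by move=> /forallP Av; apply/forallP => u; apply/implyP => /(implyP (Av u))/sAB.
Qed.

Definition moved (s1 : strat1 E d) (s2 : strat2 E d) h (c : conf V d) : V :=
  if controls Own (cpawns c) (cpos c) then s1move s1 h c else s2move s2 h c.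

Lemma step_moved s1 s2 h c : step Own s1 s2 h c =
  let u := moved s1 s2 h c in
  if s1grab s1 h c u is Some j then (u, j |: cpawns c, (cgrabs c).-1)
  else (u, cpawns c, cgrabs c).
Proof. by []. Qed.

Lemma moved_in_cpre s1 s2 h c A : cpos c \in cpre (cpawns c) A ->
  (controls Own (cpawns c) (cpos c) -> s1move s1 h c \in A) ->
  moved s1 s2 h c \in A.
Proof.
rewrite /moved inE; case: ifP => [_ _ -> //|_ /forallP /(_ (s2move s2 h c)) sA _].
by rewrite (implyP sA) ?s2move_ok.
Qed.

Lemma moved_notin_cpre s1 s2 h c A : cpos c \notin cpre (cpawns c) A ->
  (~~ controls Own (cpawns c) (cpos c) -> s2move s2 h c \notin A) ->
  moved s1 s2 h c \notin A.
Proof.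
rewrite /moved inE; case: ifP => [_ /existsPn /(_ (s1move s1 h c)) nA _|_ _ -> //].
by rewrite s1move_ok in nA.
Qed.

Lemma playS (s1 : strat1 E d) (s2 : strat2 E d) c0 m :
  play Own s1 s2 c0 m.+1 = step Own s1 s2 (run Own s1 s2 c0 m).1 (play Own s1 s2 c0 m).
Proof. by []. Qed.

End Rounds.

Section Attractor.
Variables (V : finType) (E : rel V) (T : {set V}) (d : nat) (Own : 'I_d -> {set V}).

Definition attr_step (P : {set 'I_d}) (X A : {set V}) : {set V} :=
  T :|: cpre E Own P (A :|: X).

Lemma attr_step_mono P X : {homo attr_step P X : A B / A \subset B}.
Proof. by move=> A B sAB; rewrite setUS // cpre_mono // setSU. Qed.

Fixpoint win (r : nat) (P : {set 'I_d}) : {set V} :=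
  fixset (attr_step P (if r is r'.+1 then
    [set u | [exists j in ~: P, u \in win r' (j |: P)]] else set0)).

Definition grab_set (r : nat) (P : {set 'I_d}) : {set V} :=
  if r is r'.+1 then [set u | [exists j in ~: P, u \in win r' (j |: P)]] else set0.

Local Notation attr r P := (attr_step P (grab_set r P)).

Lemma winE r P : win r P = fixset (attr r P).
Proof. by case: r. Qed.

Lemma win_fix r P : attr r P (win r P) = win r P.
Proof. by rewrite winE fixsetK //; apply: attr_step_mono. Qed.

Lemma sub_win r P : T \subset win r P.
Proof. by rewrite -win_fix subsetUl. Qed.

Lemma grab_setP r (P : {set 'I_d}) u :
  reflect (exists r' j, [/\ r = r'.+1, j \notin P & u \in win r' (j |: P)])
          (u \in grab_set r P).
Proof.
case: r => [|r] /=; first by rewrite inE; constructor => -[r' [j []]].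
rewrite inE; apply: (iffP exists_inP) => [[j Pj Wu]|[_ [j [[<-] Pj Wu]]]].
  by exists r, j; rewrite -in_setC.
by exists j; rewrite ?inE.
Qed.

(* [fix_order] iterates from [set0]: vertices of T have rank 1, and rank 0
   means outside [win r P]. *)
Definition rank (r : nat) (P : {set 'I_d}) : V -> nat := fix_order (attr r P).

Lemma win_cpre_rank r P v : v \in win r P -> v \notin T ->
  v \in cpre E Own P (iter (rank r P v).-1 (attr r P) set0 :|: grab_set r P).
Proof.
rewrite winE => Wv nTv.
have := in_iter_fix_orderE (attr r P) v; have := fix_order_gt0 (attr r P) v.
rewrite Wv -/(rank r P v); case: (rank r P v) => //= n _.
by rewrite in_setU (negbTE nTv).
Qed.

Section Strategies.
Hypothesis Hsucc : forall v : V, exists u : V, E v u.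

Definition some_succ (v : V) : V := xchoose (Hsucc v).

Lemma some_succ_edge v : E v (some_succ v).
Proof. exact: xchooseP. Qed.

Definition attr_move (c : conf V d) : V :=
  let: (v, P, r) := c in
  odflt (some_succ v)
    [pick u | E v u && (u \in iter (rank r P v).-1 (attr r P) set0 :|: grab_set r P)].

Definition attr_grab (c : conf V d) (u : V) : option 'I_d :=
  let: (_, P, r) := c in
  if r is r'.+1 then [pick j in ~: P | u \in win r' (j |: P)] else None.

Lemma attr_move_edge c : E (cpos c) (attr_move c).
Proof.
by case: c => [[v P] r] /=; case: pickP => [u /andP[]|_] //=; apply: some_succ_edge.
Qed.

Lemma attr_grab_ok c u j : attr_grab c u = Some j ->
  0 < cgrabs c /\ j \notin cpawns c.
Proof.
case: c => [[v P] [|r]] //=; case: pickP => // j' /andP[].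
by rewrite inE => Pj _ [<-].
Qed.

Definition attr_strat : strat1 E d :=
  Strat1 (fun _ => attr_move_edge) (fun _ => attr_grab_ok).

Definition trap_move (c : conf V d) : V :=
  let: (v, P, r) := c in
  odflt (some_succ v) [pick u | E v u && (u \notin win r P :|: grab_set r P)].

Lemma trap_move_edge c : E (cpos c) (trap_move c).
Proof.
by case: c => [[v P] r] /=; case: pickP => [u /andP[]|_] //=; apply: some_succ_edge.
Qed.

Definition trap_strat : strat2 E d := Strat2 (fun _ => trap_move_edge).

Lemma attr_strat_round s2 c0 m v P r n :
  play Own attr_strat s2 c0 m = (v, P, r) ->
  v \in iter n.+1 (attr r P) set0 -> v \notin T ->
  (exists2 u, play Own attr_strat s2 c0 m.+1 = (u, P, r)
            & u \in iter n (attr r P) set0) \/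
  (exists r' j u, [/\ r = r'.+1, play Own attr_strat s2 c0 m.+1 = (u, j |: P, r')
                    & u \in win r' (j |: P)]).
Proof.
move=> Hm Hv nTv; rewrite playS Hm step_moved /=.
have Wv : v \in win r P.
  by rewrite winE; apply: subsetP Hv; apply/iter_sub_fix/attr_step_mono.
have Hpre := win_cpre_rank Wv nTv.
have Au : moved Own attr_strat s2 (run Own attr_strat s2 c0 m).1 (v, P, r) \in
          iter (rank r P v).-1 (attr r P) set0 :|: grab_set r P.
  apply: (moved_in_cpre s2 (c := (v, P, r)) Hpre) => /= Cv.
  case: pickP => [u /andP[] //|none].
  by move: Hpre; rewrite inE Cv => /existsP[u]; rewrite none.
move: (moved _ _ _ _ _) Au => u Au; clear Hm Wv Hpre.
have Hu : u \notin grab_set r P -> u \in iter n (attr r P) set0.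
  move=> nXu; move: Au; rewrite in_setU (negbTE nXu) orbF.
  apply/subsetP/subset_iter; first exact: attr_step_mono.
  by rewrite -subn1 leq_subLR add1n (fix_order_small (@attr_step_mono _ _) Hv).
case: r Hv Hu {Au} => [|r] Hv Hu /=; first by left; exists u; rewrite ?Hu ?inE.
case: pickP => [j /andP[Pj Wu]|none]; first by right; exists r, j, u.
left; exists u => //; apply: Hu; apply/grab_setP => -[r' [j [[<-] Pj Wu]]].
by have := none j; rewrite inE Pj Wu.
Qed.

Lemma attr_strat_reaches s2 c0 r m P v n :
  play Own attr_strat s2 c0 m = (v, P, r) -> v \in iter n (attr r P) set0 ->
  exists2 n', n' < n + #|V| * r & cpos (play Own attr_strat s2 c0 (m + n')) \in T.
Proof.
elim/ltn_ind: r m P v n => r IHr m P v n.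
elim: n m v => [|n IHn] m v Hm Hv; first by rewrite inE in Hv.
have [Tv|nTv] := boolP (v \in T); first by exists 0; rewrite ?addn0 ?Hm.
case: (attr_strat_round Hm Hv nTv) => [[u Hm' Hu]|[r' [j [u [Er Hm' Wu]]]]].
  have [n' Hn' Tn'] := IHn m.+1 u Hm' Hu.
  by exists n'.+1; rewrite ?addSn ?addnS.
rewrite winE in Wu; have [|n' Hn' Tn'] := IHr r' _ m.+1 _ u #|V| Hm' Wu.
  by rewrite Er.
by exists n'.+1; rewrite ?addnS // Er mulnS; lia.
Qed.

Definition outside_win (c : conf V d) : bool :=
  cpos c \notin win (cgrabs c) (cpawns c).

Lemma trap_strat_round s1 h c :
  outside_win c -> outside_win (step Own s1 trap_strat h c).
Proof.
case: c => [[v P] r]; rewrite /outside_win /= => nWv.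
have Hpre : v \notin cpre E Own P (win r P :|: grab_set r P).
  by apply: contra nWv => Hpre; rewrite -win_fix in_setU Hpre orbT.
have : moved Own s1 trap_strat h (v, P, r) \notin win r P :|: grab_set r P.
  apply: (moved_notin_cpre s1 (c := (v, P, r)) Hpre) => /= nCv.
  case: pickP => [u /andP[] //|none].
  by move: Hpre; rewrite inE (negbTE nCv) => /forallPn[u]; rewrite negb_imply none.
rewrite step_moved /= in_setU negb_or => /andP[nWu nXu].
case Hg: s1grab => [j|] //=; have [/= r_gt0 Pj] := s1grab_ok Hg.
apply: contra nXu => Wu; apply/grab_setP; exists r.-1, j.
by rewrite prednK.
Qed.

Lemma trap_strat_traps s1 c0 m :
  outside_win c0 -> outside_win (play Own s1 trap_strat c0 m).
Proof. by move=> Hc0; elim: m => // m IHm; rewrite playS trap_strat_round. Qed.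

End Strategies.
End Attractor.

Theorem lemma34 (V : finType) (E : rel V) (T : {set V}) (d : nat)
    (Own : 'I_d -> {set V}) (k : nat)
    (Hcover : forall v : V, exists j : 'I_d, v \in Own j)
    (Hsucc : forall v : V, exists u : V, E v u)
    (v0 : V) (P0 : {set 'I_d})
    (Hwin : wins1 E Own T (v0, P0, k)) :
  exists s1 : strat1 E d, forall s2 : strat2 E d,
    exists n, n <= #|V| * k.+1 /\ cpos (play Own s1 s2 (v0, P0, k) n) \in T.
Proof.
have [Wv0|nWv0] := boolP (v0 \in win E T Own k P0).
  exists (attr_strat T Own Hsucc) => s2; rewrite winE in Wv0.
  have [n Hn Tn] := attr_strat_reaches (s2 := s2) (m := 0) (erefl _) Wv0.
  by exists n; rewrite mulnS ltnW.
case: Hwin => s1 /(_ (trap_strat T Own Hsucc)) [n Tn]; exfalso.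
have /negP := trap_strat_traps (c0 := (v0, P0, k)) Hsucc s1 n nWv0; apply.
exact: subsetP (sub_win E T Own _ _) _ Tn.
Qed.
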